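(* Let $X = \langle x_1,\dots,x_L\rangle$ be a random sequence with distribution $p$ over $\mathcal{V}^L$ for a finite vocabulary $\mathcal{V}$, fix distinct indices $i,j$ and fix the values of the other tokens $X_{\setminus\{i,j\}}$. Let $p_\theta(\cdot \mid X_{\setminus i})$ be any model assigning, for every masked sequence $X_{\setminus i}$, a probability distribution over $\mathcal{V}$ for the masked token. Define $$I_p = \mathbb{E}_{x_i,x_j}\Big[\log p\big(x_i \mid X_{\setminus i}(j,x_j)\big) - \log \mathbb{E}_{x_j'}\, p\big(x_i \mid X_{\setminus i}(j,x_j')\big)\Big],$$ $$\hat I_{p_\theta} = \mathbb{E}_{x_i,x_j}\Big[\log p_\theta\big(x_i \mid X_{\setminus i}(j,x_j)\big) - \log \mathbb{E}_{x_j'}\, p_\theta\big(x_i \mid X_{\setminus i}(j,x_j')\big)\Big],$$ where $(x_i,x_j)$ is drawn from the true conditional distribution $p(x_i,x_j \mid X_{\setminus\{i,j\}})$ and $x_j'$ is drawn from $p(x_j \mid X_{\setminus\{i,j\}})$ (so $I_p = I_p(x_i;x_j\mid X_{\setminus\{i,j\}})$ is the conditional mutual information). Then $$\big|\hat I_{p_\theta} - I_p\big| \le \mathbb{E}_{x_j}\, D_{\mathrm{KL}}\Big(p\big(x_i \mid X_{\setminus i}(j,x_j)\big)\,\Big\|\, p_\theta\big(x_i \mid X_{\setminus i}(j,x_j)\big)\Big),$$ with $x_j \sim p(x_j\mid X_{\setminus\{i,j\}})$.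
   Context: For a sequence $X$, $X_{\setminus i}$ denotes $X$ with the $i$th token replaced by a special mask token, and $X_{\setminus\{i,j\}}$ denotes $X$ with both the $i$th and $j$th tokens masked. $X(j,v)$ denotes $X$ with its $j$th token replaced by $v \in \mathcal{V}$; thus $X_{\setminus i}(j,x_j)$ is the sequence with token $i$ masked, token $j$ equal to $x_j$, and all other tokens fixed. $D_{\mathrm{KL}}$ is the Kullback–Leibler divergence (possibly $+\infty$, in which case the bound is trivial). *)

From HB Require Import structures.
From mathcomp Require Import all_boot all_order all_algebra.
From mathcomp Require Import all_classical all_reals.
From mathcomp Require Import all_analysis.

Set Implicit Arguments.
Unset Strict Implicit.
Unset Printing Implicit Defensive.

Import Order.TTheory GRing.Theory Num.Theory.
Local Open Scope ring_scope.

Section Defs.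
Variables (R : realType) (V : finType) (L : nat).

(* Full sequences in V^L and masked sequences (None = mask token). *)
Definition fseq := {ffun 'I_L -> V}.
Definition mseq := {ffun 'I_L -> option V}.

Definition is_dist (T : finType) (P : T -> R) :=
  (forall t, 0 <= P t) /\ \sum_(t : T) P t = 1.

Definition maskv (i : 'I_L) (X : fseq) : mseq :=
  [ffun k => if k == i then None else Some (X k)].

Definition setm (Y : mseq) (j : 'I_L) (v : V) : mseq :=
  [ffun k => if k == j then Some v else Y k].

Definition setf (X : fseq) (j : 'I_L) (v : V) : fseq :=
  [ffun k => if k == j then v else X k].

Definition unmask (Y : mseq) (a : V) : fseq :=
  [ffun k => if Y k is Some v then v else a].

(* True conditional p(x_i = a | Y), Y having position i masked. *)
Definition condp (p : fseq -> R) (Y : mseq) (a : V) : R :=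
  p (unmask Y a) / \sum_(a' : V) p (unmask Y a').

Definition fill (X : fseq) (i j : 'I_L) (a b : V) : fseq :=
  setf (setf X i a) j b.

Definition joint (p : fseq -> R) (X : fseq) (i j : 'I_L) (a b : V) : R :=
  p (fill X i j a b) / \sum_(a' : V) \sum_(b' : V) p (fill X i j a' b').

Definition marg_j (p : fseq -> R) (X : fseq) (i j : 'I_L) (b : V) : R :=
  \sum_(a : V) joint p X i j a b.

Definition plugin_mi (p : fseq -> R) (r : mseq -> V -> R)
    (X : fseq) (i j : 'I_L) : R :=
  \sum_(a : V) \sum_(b : V) joint p X i j a b *
    (ln (r (setm (maskv i X) j b) a)
     - ln (\sum_(b' : V) marg_j p X i j b' * r (setm (maskv i X) j b') a)).

Definition KL (P Q : V -> R) : \bar R :=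
  (\sum_(a : V)
     (if P a == 0%R then 0%E
      else if Q a == 0%R then +oo%E
      else ((P a * ln (P a / Q a))%R)%:E))%E.

End Defs.

From HB Require Import structures.
From mathcomp Require Import all_boot all_order all_algebra.
From mathcomp Require Import all_classical all_reals.
From mathcomp Require Import all_analysis.
From mathcomp Require Import ring lra.

(* Write J for the conditional law of (x_i, x_j), q for that of x_j,
   P_b = J(., b) / q(b), T_b = p_theta(. | X_{\i}(j, b)), and let m and M be
   the q-mixtures of the P_b and of the T_b.  Expanding the logarithms gives
   I_hat - I = KL(m || M) - E_q KL(P_b || T_b).  The first term is
   nonnegative by Gibbs' inequality and, by the log-sum inequality applied for
   each x_i, at most the second; hence |I_hat - I| <= E_q KL(P_b || T_b).
   When some T_b vanishes where J(., b) does not, the right-hand side is +oo. *)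

Set Implicit Arguments.
Unset Strict Implicit.
Unset Printing Implicit Defensive.

Import Order.TTheory GRing.Theory Num.Theory.
Local Open Scope ring_scope.

Lemma ln_le_subr1 (R : realType) (x : R) : 0 < x -> ln x <= x - 1.
Proof.
move=> x0; have := @le_ln1Dx R (x - 1).
by rewrite addrCA subrr addr0; apply; rewrite ltrBrDl subrr.
Qed.

Lemma sumr_gt0 (R : numDomainType) (I : finType) (F : I -> R) (i : I) :
  (forall j, 0 <= F j) -> 0 < F i -> 0 < \sum_j F j.
Proof. by move=> F0 Fi; rewrite (bigD1 i) //= ltr_pwDl ?sumr_ge0. Qed.

Section RelativeEntropy.
Variables (R : realType) (T : finType).
Implicit Types (P Q : T -> R) (c : R).

Definition relent P Q : R :=
  \sum_t (if P t == 0 then 0 else P t * ln (P t / Q t)).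

Lemma relent_ge_sumB P Q :
  (forall t, 0 <= P t) -> (forall t, 0 <= Q t) ->
  (forall t, P t != 0 -> 0 < Q t) ->
  \sum_t P t - \sum_t Q t <= relent P Q.
Proof.
move=> P0 Q0 PQ; rewrite -sumrB; apply: ler_sum => t _.
have [->|Pt] := eqVneq (P t) 0; first by rewrite sub0r oppr_le0.
have Pt0 : 0 < P t by rewrite lt0r Pt P0.
have Qt0 := PQ t Pt.
have := ler_wpM2l (ltW Pt0) (ln_le_subr1 (divr_gt0 Qt0 Pt0)).
have -> : P t * (Q t / P t - 1) = Q t - P t by field; rewrite lt0r_neq0.
rewrite !ln_div ?posrE //; lra.
Qed.

Lemma relentZr P Q c : 0 < c ->
  (forall t, 0 <= P t) -> (forall t, P t != 0 -> 0 < Q t) ->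
  relent P (fun t => c * Q t) = relent P Q - (\sum_t P t) * ln c.
Proof.
move=> c0 P0 PQ; rewrite mulr_suml -sumrB; apply: eq_bigr => t _.
have [->|Pt] := eqVneq (P t) 0; first by rewrite mul0r subr0.
have [Pt0 Qt0] : 0 < P t /\ 0 < Q t by rewrite lt0r Pt P0 PQ.
by rewrite !ln_div ?lnM ?posrE ?mulr_gt0 //; ring.
Qed.

Lemma log_sum_le P Q :
  (forall t, 0 <= P t) -> (forall t, 0 <= Q t) ->
  (forall t, P t != 0 -> 0 < Q t) ->
  (\sum_t P t) * ln ((\sum_t P t) / \sum_t Q t) <= relent P Q.
Proof.
move=> P0 Q0 PQ; have [sumP0|] := eqVneq (\sum_t P t) 0.
  have P_eq0 := psumr_eq0P (fun t _ => P0 t) sumP0.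
  by rewrite sumP0 mul0r /relent big1 // => t _; rewrite P_eq0 ?eqxx.
move=> /eqP /(psumr_neq0P (fun t _ => P0 t)) [t /= Pt0].
have sumP0 := sumr_gt0 P0 Pt0.
have sumQ0 := sumr_gt0 Q0 (PQ t (lt0r_neq0 Pt0)).
have c0 := divr_gt0 sumP0 sumQ0.
have := relent_ge_sumB P0 (fun t => mulr_ge0 (ltW c0) (Q0 t))
  (fun t Pt => mulr_gt0 c0 (PQ t Pt)).
by rewrite relentZr // -mulr_sumr divfK ?lt0r_neq0 // subrr subr_ge0.
Qed.

End RelativeEntropy.

Section PluginEstimate.
Variables (R : realType) (A B : finType) (J : A -> B -> R).

Definition marg1 a : R := \sum_b J a b.
Definition marg2 b : R := \sum_a J a b.
Definition cond b a : R := J a b / marg2 b.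

Definition plugin (r : B -> A -> R) : R :=
  \sum_a \sum_b J a b * (ln (r b a) - ln (\sum_b' marg2 b' * r b' a)).

Hypothesis J0 : forall a b, 0 <= J a b.

Lemma marg2_ge0 b : 0 <= marg2 b.
Proof. exact: sumr_ge0. Qed.

Lemma marg2_eq0 a b : marg2 b = 0 -> J a b = 0.
Proof. by move=> /psumr_eq0P; apply. Qed.

Lemma mulr_marg2_cond a b : marg2 b * cond b a = J a b.
Proof.
have [m0|m0] := eqVneq (marg2 b) 0; last by rewrite mulrC divfK.
by rewrite m0 mul0r marg2_eq0.
Qed.

Lemma marg2_gt0 a b : J a b != 0 -> 0 < marg2 b.
Proof.
by move=> Jab; apply: (sumr_gt0 (J0 ^~ b) (i := a)); rewrite lt0r Jab J0.
Qed.

Lemma cond_eq0 a b : (cond b a == 0) = (J a b == 0).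
Proof.
rewrite mulf_eq0 invr_eq0; have [m0|] := eqVneq (marg2 b) 0; last by rewrite orbF.
by rewrite marg2_eq0 ?eqxx.
Qed.

Lemma sum_marg2_cond a : \sum_b marg2 b * cond b a = marg1 a.
Proof. by apply: eq_bigr => b _; rewrite mulr_marg2_cond. Qed.

Variable T : B -> A -> R.
Hypotheses (T0 : forall b a, 0 <= T b a) (T1 : forall b, \sum_a T b a = 1).
Hypothesis JT : forall a b, J a b != 0 -> 0 < T b a.

Let mix a := \sum_b marg2 b * T b a.

Lemma J_neq0_gt0 a b : J a b != 0 ->
  [/\ 0 < J a b, 0 < marg1 a, 0 < marg2 b, 0 < T b a & 0 < mix a].
Proof.
move=> Jab; have Jab0 : 0 < J a b by rewrite lt0r Jab J0.
have m2 := marg2_gt0 Jab.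
split=> //; [exact: sumr_gt0 (J0 a) Jab0 | exact: JT |].
exact: sumr_gt0 (fun b => mulr_ge0 (marg2_ge0 b) (T0 b a)) (mulr_gt0 m2 (JT Jab)).
Qed.

Lemma relent_marg1_mix :
  relent marg1 mix = \sum_a \sum_b J a b * (ln (marg1 a) - ln (mix a)).
Proof.
apply: eq_bigr => a _; rewrite -mulr_suml -/(marg1 a).
have [->|/eqP m1] := eqVneq (marg1 a) 0; first by rewrite mul0r.
have [b /= /lt0r_neq0 Jab] := psumr_neq0P (fun b _ => J0 a b) m1.
by have [_ m1a _ _ mixa] := J_neq0_gt0 Jab; rewrite ln_div.
Qed.

Lemma sum_marg2_relent_cond : \sum_b marg2 b * relent (cond b) (T b) =
  \sum_a \sum_b J a b * (ln (cond b a) - ln (T b a)).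
Proof.
rewrite exchange_big; apply: eq_bigr => b _; rewrite mulr_sumr.
apply: eq_bigr => a _; rewrite cond_eq0.
have [->|Jab] := eqVneq (J a b) 0; first by rewrite mulr0 mul0r.
have [Jab0 _ m2 Tba _] := J_neq0_gt0 Jab.
by rewrite mulrA mulr_marg2_cond ln_div // posrE divr_gt0.
Qed.

Lemma sum_marg2_relent_cond_joint : \sum_b marg2 b * relent (cond b) (T b) =
  \sum_a relent (J a) (fun b => marg2 b * T b a).
Proof.
rewrite exchange_big; apply: eq_bigr => b _; rewrite mulr_sumr.
apply: eq_bigr => a _; rewrite cond_eq0; case: eqP => _; first by rewrite mulr0.
by rewrite mulrA mulr_marg2_cond /cond invfM mulrA.
Qed.

Lemma plugin_sub_cond : plugin T - plugin cond =
  relent marg1 mix - \sum_b marg2 b * relent (cond b) (T b).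
Proof.
rewrite relent_marg1_mix sum_marg2_relent_cond /plugin /mix.
under [in X in _ - X]eq_bigr => a _ do rewrite sum_marg2_cond.
rewrite -!sumrB; apply: eq_bigr => a _; rewrite -!sumrB.
by apply: eq_bigr => b _; ring.
Qed.

Hypothesis J1 : \sum_a \sum_b J a b = 1.

Lemma relent_marg1_mix_ge0 : 0 <= relent marg1 mix.
Proof.
have sum_mix : \sum_a mix a = 1.
  rewrite exchange_big -J1 [RHS]exchange_big; apply: eq_bigr => b _.
  by rewrite -mulr_sumr T1 mulr1.
have := relent_ge_sumB (P := marg1) (Q := mix)
  (fun a => sumr_ge0 _ (fun b _ => J0 a b))
  (fun a => sumr_ge0 _ (fun b _ => mulr_ge0 (marg2_ge0 b) (T0 b a))).
rewrite sum_mix J1 subrr; apply=> a /eqP m1.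
have [b /= /lt0r_neq0 Jab] := psumr_neq0P (fun b _ => J0 a b) m1.
by have [] := J_neq0_gt0 Jab.
Qed.

Lemma relent_marg1_mix_le :
  relent marg1 mix <= \sum_b marg2 b * relent (cond b) (T b).
Proof.
rewrite sum_marg2_relent_cond_joint; apply: ler_sum => a _.
have := log_sum_le (J0 a) (fun b => mulr_ge0 (marg2_ge0 b) (T0 b a))
  (fun b Jab => let: And5 _ _ m2 Tba _ := J_neq0_gt0 Jab in mulr_gt0 m2 Tba).
by rewrite -/(marg1 a) -/(mix a); case: eqP => [->|_]; rewrite ?mul0r.
Qed.

Theorem plugin_error_le :
  `|plugin T - plugin cond| <= \sum_b marg2 b * relent (cond b) (T b).
Proof.
rewrite plugin_sub_cond ler_norml.
have := relent_marg1_mix_ge0; have := relent_marg1_mix_le.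
by move=> *; apply/andP; split; lra.
Qed.

End PluginEstimate.

Section KullbackLeibler.
Variables (R : realType) (V : finType).
Implicit Types (P Q : V -> R).

Lemma KL_neqNy P Q : KL P Q != -oo%E.
Proof.
by rewrite /KL esum_eqNy; apply/existsP => -[a /=]; case: ifP => //; case: ifP.
Qed.

Lemma KL_EFin P Q : (forall a, P a != 0 -> Q a != 0) -> KL P Q = (relent P Q)%:E.
Proof.
move=> PQ; rewrite /KL /relent -sumEFin; apply: eq_bigr => a _.
by case: eqP => // /eqP Pa; rewrite (negbTE (PQ a Pa)).
Qed.

Lemma KL_eqy P Q a : P a != 0 -> Q a = 0 -> KL P Q = +oo%E.
Proof.
move=> Pa Qa; apply/esum_eqyP => [a' _|]; first by case: ifP => //; case: ifP.
by exists a; rewrite mem_index_enum (negbTE Pa) Qa eqxx.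
Qed.

End KullbackLeibler.

Lemma ge0_mule_neqNy (R : realType) (x : R) (y : \bar R) :
  0 <= x -> y != -oo%E -> (x%:E * y)%E != -oo%E.
Proof.
move=> x0; case: y => [r||] // _.
have [->|xn0] := eqVneq x 0; first by rewrite mul0e.
by rewrite gt0_muley // lte_fin lt0r xn0 x0.
Qed.

Lemma unmask_setm_maskv (V : finType) (L : nat) (X : fseq V L) (i j : 'I_L)
    (a b : V) :
  unmask (setm (maskv i X) j b) a = fill X i j a b.
Proof. by apply/ffunP => k; rewrite !ffunE; case: (k == j); case: (k == i). Qed.

Section MaskedSequences.
Variables (R : realType) (V : finType) (L : nat) (p : fseq V L -> R).
Variables (X : fseq V L) (i j : 'I_L).

Lemma plugin_miE (r : mseq V L -> V -> R) :
  plugin_mi p r X i j =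
  plugin (joint p X i j) (fun b => r (setm (maskv i X) j b)).
Proof. by []. Qed.

Lemma marg_jE : marg_j p X i j = marg2 (joint p X i j).
Proof. by []. Qed.

Hypothesis p0 : forall x, 0 <= p x.

Lemma joint_ge0 a b : 0 <= joint p X i j a b.
Proof. by apply: divr_ge0 => //; do 2!apply: sumr_ge0 => ? _. Qed.

Hypothesis Z0 : 0 < \sum_a \sum_b p (fill X i j a b).

Lemma sum_joint : \sum_a \sum_b joint p X i j a b = 1.
Proof.
under eq_bigr => a _ do rewrite -mulr_suml.
by rewrite -mulr_suml divff // lt0r_neq0.
Qed.

Lemma condp_setm_maskv b :
  condp p (setm (maskv i X) j b) = cond (joint p X i j) b.
Proof.
apply/funext => a.
rewrite /condp /cond /marg2 /joint -mulr_suml unmask_setm_maskv.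
under eq_bigr => a' _ do rewrite unmask_setm_maskv.
by rewrite invfM invrK mulrACA mulVf ?mulr1 ?lt0r_neq0.
Qed.

End MaskedSequences.

Theorem proposition4 (R : realType) (V : finType) (L : nat)
    (p : fseq V L -> R) (ptheta : mseq V L -> V -> R)
    (i j : 'I_L) (X : fseq V L) :
  is_dist p ->
  (forall Y : mseq V L, is_dist (ptheta Y)) ->
  i != j ->
  0 < \sum_(a : V) \sum_(b : V) p (fill X i j a b) ->
  ((`| plugin_mi p ptheta X i j - plugin_mi p (condp p) X i j |)%:E
   <= \sum_(b : V) (marg_j p X i j b)%:E *
        KL (condp p (setm (maskv i X) j b)) (ptheta (setm (maskv i X) j b)))%E.
Proof.
move=> [p0 _] ptheta_dist _ Z0.
rewrite !plugin_miE marg_jE (funext (condp_setm_maskv Z0)).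
under eq_bigr => b _ do rewrite condp_setm_maskv //.
set J := joint p X i j; set T := fun b => ptheta (setm (maskv i X) j b).
have J0 a b : 0 <= J a b by exact: joint_ge0.
have T0 b a : 0 <= T b a := (ptheta_dist _).1 a.
have T1 b : \sum_a T b a = 1 := (ptheta_dist _).2.
have [[a b] /andP[/= Jab /eqP Tba] | JT] :=
  pickP (fun ab : V * V => (J ab.1 ab.2 != 0) && (T ab.2 ab.1 == 0)).
  suff -> : (\sum_b (marg2 J b)%:E * KL (cond J b) (T b))%E = +oo%E.
    by rewrite leey.
  apply/esum_eqyP => [b' _|].
    by rewrite ge0_mule_neqNy ?marg2_ge0 ?KL_neqNy.
  exists b; rewrite mem_index_enum (KL_eqy (a := a)) ?(cond_eq0 J0) //.
  by rewrite gt0_muley // lte_fin (marg2_gt0 J0 Jab).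
have {}JT a b : J a b != 0 -> 0 < T b a.
  by move=> Jab; have /negbT := JT (a, b); rewrite /= Jab lt0r T0 andbT.
have -> : (\sum_b (marg2 J b)%:E * KL (cond J b) (T b))%E =
    (\sum_b marg2 J b * relent (cond J b) (T b))%:E.
  rewrite -sumEFin; apply: eq_bigr => b _; rewrite KL_EFin // => a.
  by rewrite (cond_eq0 J0) => /JT /lt0r_neq0.
by rewrite lee_fin; apply: plugin_error_le => //; exact: sum_joint.
Qed.
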